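(* Let $M>N$. Then for a generic $M$-element frame $\mathcal F=\{f_1,\dots,f_M\}$ for $\mathbb R^N$, the set of vectors $x\in\mathbb R^N$ such that every $y\in\mathbb R^N$ with $|\langle y,f_k\rangle|=|\langle x,f_k\rangle|$ for all $k$ satisfies $y=\pm x$ contains an open dense subset of $\mathbb R^N$.
   Context: An $M$-element frame for $\mathbb R^N$ is a spanning family $\{f_1,\dots,f_M\}\subset\mathbb R^N$; ''generic'' means: for all frames in an open dense subset of the set of $M$-element frames (topology of $N\times M$ real matrices of rank $N$, or equivalently of their ranges of coefficients in the Grassmannian $Gr(N,M)$). *)

From HB Require Import structures.
From mathcomp Require Import all_boot all_order all_algebra.
From mathcomp Require Import all_classical all_reals all_analysis.
Set Implicit Arguments. Unset Strict Implicit. Unset Printing Implicit Defensive.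
Import Order.TTheory GRing.Theory Num.Theory.
Import numFieldTopology.Exports numFieldNormedType.Exports.
Local Open Scope classical_set_scope.
Local Open Scope ring_scope.

(* A frame {f_1,...,f_M} for R^N is encoded as the N x M real matrix F whose
   k-th column is f_k; it is a frame iff it spans R^N, i.e. \rank F = N.
   Vectors of R^N are row vectors 'rV[R]_N, and <y, f_k> = (y *m F) 0 k. *)
Definition frames (R : realType) (N M : nat) : set 'M[R]_(N, M) :=
  [set F | \rank F = N].

Definition phase_retrievable_set (R : realType) (N M : nat) (F : 'M[R]_(N, M))
  : set 'rV[R]_N :=
  [set x | forall y : 'rV[R]_N,
      (forall k : 'I_M, `|(y *m F) 0 k| = `|(x *m F) 0 k|) -> y = x \/ y = - x].

From HB Require Import structures.
From mathcomp Require Import all_boot all_order all_algebra.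
From mathcomp Require Import all_classical all_reals all_analysis.
From mathcomp Require Import perm zify.
Import Order.TTheory GRing.Theory Num.Theory.
Import numFieldTopology.Exports numFieldNormedType.Exports.
Local Open Scope classical_set_scope.
Local Open Scope ring_scope.

(* Generic frames are the full-spark ones, in which every N of the f_k form a
   basis: this is an open condition (finitely many minors do not vanish) and a
   dense one (for a Vandermonde matrix V, the minors of F + t^-1 V are, up to the
   factor t^-N, polynomials in t that do not vanish at t = 0, hence nonzero for
   large t).  For a partition of the indices into
   nonempty S and ~S, the spans of {f_k | k in S} and {f_k | k in ~S} have
   dimensions min(|S|, N) and min(|~S|, N), whose sum exceeds N because M > N, so
   they contain a common nonzero vector z_S.  If |<y,f_k>| = |<x,f_k>| for all k
   and S is the set of k with <y,f_k> = <x,f_k>, then y - x is orthogonal to the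
   f_k with k in S and y + x to the others, hence 2x is orthogonal to z_S; the
   cases S empty or full give y = -x or y = x.  So every x outside the finitely
   many hyperplanes orthogonal to the z_S is determined up to sign. *)

Lemma mul_mx_pidE (R : pzSemiRingType) m n (A : 'M[R]_(m, n)) r i j :
  (A *m pid_mx r) i j = A i j *+ (j < r)%N.
Proof.
rewrite mxE (bigD1 j) //= big1 => [|k /negbTE neq_kj]; last first.
  by rewrite mxE (inj_eq val_inj) neq_kj mulr0.
by rewrite mxE eqxx /= mulr_natr addr0.
Qed.

Section FullSpark.
Context {K : fieldType} {N M : nat}.
Implicit Types (F : 'M[K]_(N, M)) (S : {set 'I_M}).

Definition full_spark F :=
  forall s : {ffun 'I_N -> 'I_M}, injectiveb s -> \det (colsub s F) != 0.

Definition col_mask S : 'rV[K]_M := \row_k (k \in S)%:R.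

Definition restrict_cols F S := F *m diag_mx (col_mask S).

Lemma mul_restrict_cols_eq0 (u : 'rV[K]_N) F S :
  {in S, forall k, (u *m F) 0 k = 0} -> u *m restrict_cols F S = 0.
Proof.
move=> uF0; apply/rowP => k; rewrite mulmxA mul_mx_diag mxE [col_mask _ 0 k]mxE [RHS]mxE.
by case: (boolP (k \in S)) => [/uF0 ->|_]; rewrite ?mul0r ?mulr0.
Qed.

Lemma rank_colsub_le {n} (s : 'I_n -> 'I_M) F : (\rank (colsub s F) <= \rank F)%N.
Proof. by rewrite -[F in colsub _ F]mulmx1 -mulmx_colsub mxrankM_maxl. Qed.

Section Wide.
Hypothesis leNM : (N <= M)%N.

Lemma full_spark_rank F : full_spark F -> \rank F = N.
Proof.
move=> sparkF; pose s := [ffun j : 'I_N => widen_ord leNM j].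
have s_inj : injectiveb s.
  by apply/injectiveP => i j; rewrite !ffunE => /(congr1 val) /= /val_inj.
apply/eqP; rewrite eqn_leq rank_leq_row -{1}(mxrank_unit (_ : colsub s F \in unitmx)).
  exact: rank_colsub_le.
by rewrite unitmxE unitfE sparkF.
Qed.

Lemma exists_injection_prefix S :
  exists2 s : {ffun 'I_N -> 'I_M}, injectiveb s &
    forall j, (s j \in S) = (j < #|S|)%N.
Proof.
pose e := enum S ++ enum (~: S).
have size_e : size e = M by rewrite size_cat -!cardE cardsC card_ord.
have uniq_e : uniq e.
  by rewrite cat_uniq !enum_uniq /= andbT; apply/hasPn => x; rewrite !mem_enum inE.
have lt_jM (j : 'I_N) : (j < M)%N := leq_trans (ltn_ord j) leNM.
exists [ffun j : 'I_N => nth (widen_ord leNM j) e j].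
  apply/injectiveP => i j; rewrite !ffunE (set_nth_default (widen_ord leNM i)) ?size_e //.
  by move/eqP; rewrite nth_uniq ?size_e // => /eqP /val_inj.
move=> j; rewrite ffunE nth_cat -cardE; case: ifP => jS.
  by rewrite -mem_enum mem_nth // -cardE.
apply/negbTE; rewrite -finset.in_setC -mem_enum mem_nth // -cardE.
rewrite -(ltn_add2l #|S|) subnKC; last by rewrite leqNgt jS.
by rewrite cardsC card_ord.
Qed.

Lemma full_spark_rank_restrict_cols F S :
  full_spark F -> (minn #|S| N <= \rank (restrict_cols F S))%N.
Proof.
move=> sparkF; have [s s_inj sS] := exists_injection_prefix S.
have restrictE : colsub s (restrict_cols F S) = colsub s F *m pid_mx (minn #|S| N).
  apply/matrixP => i j; rewrite mul_mx_pidE [LHS]mxE /restrict_cols mul_mx_diag !mxE sS.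
  have -> : (j < minn #|S| N)%N = (j < #|S|)%N by have := ltn_ord j; lia.
  by case: (j < #|S|)%N; rewrite ?mul1r ?mulr1 ?mulr0.
have := rank_colsub_le s (restrict_cols F S); rewrite restrictE.
rewrite -mxrank_tr trmx_mul mxrankMfree ?mxrank_tr ?rank_pid_mx ?geq_minr //.
by rewrite row_free_unit unitmx_tr unitmxE unitfE sparkF.
Qed.

End Wide.

Definition partition_normal F S : 'rV[K]_N :=
  nz_row ((restrict_cols F S)^T :&: (restrict_cols F (~: S))^T)%MS.

Lemma partition_normal_neq0 F S : (N < M)%N -> (0 < N)%N -> full_spark F ->
  (0 < #|S|)%N -> (0 < #|~: S|)%N -> partition_normal F S != 0.
Proof.
move=> ltNM N_gt0 sparkF cardS_gt0 cardSC_gt0.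
have rkS := full_spark_rank_restrict_cols (ltnW ltNM) _ S sparkF.
have rkSC := full_spark_rank_restrict_cols (ltnW ltNM) _ (~: S) sparkF.
have := cardsC S; rewrite card_ord => cardSSC.
have := mxrank_sum_cap (restrict_cols F S)^T (restrict_cols F (~: S))^T.
have := rank_leq_col ((restrict_cols F S)^T + (restrict_cols F (~: S))^T)%MS.
rewrite nz_row_eq0 -mxrank_eq0 !mxrank_tr -lt0n.
lia.
Qed.

Lemma mul_tr_submx_eq0 {m n} {z : 'rV[K]_m} {A : 'M[K]_(m, n)} {u : 'rV[K]_m} :
  (z <= A^T)%MS -> u *m A = 0 -> u *m z^T = 0.
Proof. by case/submxP => w ->; rewrite trmx_mul trmxK mulmxA => ->; rewrite mul0mx. Qed.

Lemma partition_normal_sign_flip F S (x y : 'rV[K]_N) :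
  {in S, forall k, (y *m F) 0 k = (x *m F) 0 k} ->
  {in ~: S, forall k, (y *m F) 0 k = - (x *m F) 0 k} ->
  (x + x) *m (partition_normal F S)^T = 0.
Proof.
move=> eq_S opp_SC.
have sub_eq0 : (y - x) *m restrict_cols F S = 0.
  apply: mul_restrict_cols_eq0 => k /eq_S yx_k.
  by rewrite mulmxBl mxE [X in _ + X]mxE yx_k subrr.
have add_eq0 : (y + x) *m restrict_cols F (~: S) = 0.
  by apply: mul_restrict_cols_eq0 => k /opp_SC yx_k; rewrite mulmxDl mxE yx_k addNr.
have -> : x + x = (y + x) - (y - x) by rewrite opprB [RHS]addrC addrA subrK.
rewrite mulmxBl (mul_tr_submx_eq0 _ add_eq0) ?(mul_tr_submx_eq0 _ sub_eq0) ?subrr //.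
  by apply: submx_trans (nz_row_sub _) _; rewrite capmxSl.
by apply: submx_trans (nz_row_sub _) _; rewrite capmxSr.
Qed.

End FullSpark.

Lemma open_dense_bigcap (T : topologicalType) (I : finType) (A : I -> set T) :
  (forall i, open (A i)) -> (forall i, dense (A i)) ->
  open [set x | forall i, A i x] /\ dense [set x | forall i, A i x].
Proof.
move=> oA dA.
suff [oAs dAs] : open [set x | forall i, i \in enum I -> A i x] /\
                 dense [set x | forall i, i \in enum I -> A i x].
  by rewrite (_ : [set x | _] = [set x | forall i, i \in enum I -> A i x]);
    last by apply/seteqP; split=> x /= Ax i => [_|]; apply: Ax; rewrite ?mem_enum.
elim: (enum I) => [|i s [oAs dAs]].
  rewrite (_ : [set x | _] = setT); last by apply/seteqP; split.
  by split=> [|O [x Ox] _]; [exact: openT | exists x].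
rewrite (_ : [set x | _] = A i `&` [set x | forall j, j \in s -> A j x]).
  by split; [exact: openI | exact: denseI].
apply/seteqP; split=> x /=.
  by move=> Ax; split=> [|j js]; apply: Ax; rewrite inE ?eqxx ?js ?orbT.
by case=> Aix Asx j; rewrite inE => /orP[/eqP->|/Asx].
Qed.

Section Nonorthogonal.
Context {R : realFieldType} {n : nat}.
Implicit Types (x z : 'rV[R]_n).

Lemma continuous_dotmx z : continuous (fun x => (x *m z^T) 0 0).
Proof.
have -> : (fun x => (x *m z^T) 0 0) = (fun x => \sum_i x 0 i * z 0 i).
  by apply: funext => x; rewrite mxE; apply: eq_bigr => i _; rewrite mxE.
apply: continuous_big; first exact: add_continuous.
move=> i _ x; apply: (@continuousM _ _ (fun x => x 0 i) (fun=> z 0 i)).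
  exact: coord_continuous.
exact: cst_continuous.
Qed.

Lemma dotmx_self_gt0 z : z != 0 -> 0 < (z *m z^T) 0 0.
Proof.
move=> z_neq0; have [i zi_neq0] : exists i, z 0 i != 0.
  apply/existsP; apply: contraR z_neq0 => /existsPn z0.
  by apply/eqP/rowP => i; rewrite mxE; apply/eqP; move: (z0 i); rewrite negbK.
rewrite mxE (bigD1 i) //= ltr_pwDl ?sumr_ge0 // => [|j _]; rewrite mxE -expr2.
  by rewrite lt_def sqrf_eq0 zi_neq0 sqr_ge0.
exact: sqr_ge0.
Qed.

Lemma open_dense_nonorthogonal z :
  open [set x : 'rV[R]_n | z != 0 -> (x *m z^T) 0 0 != 0] /\
  dense [set x : 'rV[R]_n | z != 0 -> (x *m z^T) 0 0 != 0].
Proof.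
have [->|/eqP z_neq0] := pselect (z = 0).
  rewrite (_ : [set x | _] = setT); last by apply/seteqP; split=> // x _; rewrite eqxx.
  by split=> [|O [x Ox] _]; [exact: openT | exists x].
have -> : [set x : 'rV[R]_n | z != 0 -> (x *m z^T) 0 0 != 0] =
    (fun x => (x *m z^T) 0 0) @^-1` [set r | r != 0].
  by apply/seteqP; split=> x /=; [apply | move=> ? _].
split.
  by apply: open_comp; [move=> x _; exact: continuous_dotmx | exact: open_neq].
move=> O [p Op] oO; have /nbhs_ballP[e e_gt0 pe_O] : nbhs p O.
  exact: open_nbhs_nbhs.
have [pz0|] := eqVneq ((p *m z^T) 0 0) 0; last by exists p.
pose t := e / (`|z| + 1).
have t_gt0 : 0 < t by rewrite divr_gt0 // ltr_pwDr.
exists (p + t *: z); split.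
  apply: pe_O; rewrite -ball_normE /ball_ /= opprD addrA subrr add0r normrN normrZ.
  rewrite gtr0_norm // /t mulrAC ltr_pdivrMr ?ltr_pwDr //.
  by rewrite ltr_pM2l // ltrDl.
rewrite /= mulmxDl -scalemxAl mxE [X in X + _]pz0 add0r mxE.
by rewrite mulf_neq0 ?gt_eqF ?dotmx_self_gt0.
Qed.

End Nonorthogonal.

Section Pencil.
Context {K : fieldType} {n : nat}.
Implicit Types A B : 'M[K]_n.

Definition det_pencil A B : {poly K} :=
  \det ('X *: map_mx polyC A + map_mx polyC B).

Lemma horner_det_pencil A B t : (det_pencil A B).[t] = \det (t *: A + B).
Proof.
rewrite -horner_evalE -det_map_mx; congr (\det _); apply/matrixP => i j.
by rewrite !mxE /= horner_evalE hornerD hornerM hornerX !hornerC.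
Qed.

Lemma det_pencil_neq0 A B : \det B != 0 -> det_pencil A B != 0.
Proof.
apply: contraNneq => pencil0.
by rewrite -[B]add0r -(scale0r A) -horner_det_pencil pencil0 horner0.
Qed.

End Pencil.

Lemma full_spark_perturb {K : fieldType} {N M} (F V : 'M[K]_(N, M)) :
  full_spark V -> exists2 Q : {poly K}, Q != 0 &
    forall t, t != 0 -> ~~ root Q t -> full_spark (F + t^-1 *: V).
Proof.
move=> sparkV; pose pencil s := det_pencil (colsub s F) (colsub s V).
exists (\prod_(s : {ffun 'I_N -> 'I_M} | injectiveb s) pencil s).
  by apply/prodf_neq0 => s s_inj; exact/det_pencil_neq0/sparkV.
move=> t t_neq0; rewrite rootE horner_prod => /prodf_neq0 pencil_neq0 s s_inj.
have -> : colsub s (F + t^-1 *: V) = t^-1 *: (t *: colsub s F + colsub s V).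
  by apply/matrixP => i j; rewrite !mxE mulrDr mulrA mulVf // mul1r.
by rewrite detZ mulf_neq0 ?expf_neq0 ?invr_eq0 // -horner_det_pencil pencil_neq0.
Qed.

Lemma full_spark_Vandermonde (R : numFieldType) N M :
  full_spark (Vandermonde N (\row_(j < M) j%:R : 'rV[R]_M)).
Proof.
move=> s /injectiveP s_inj; rewrite (_ : colsub _ _ = Vandermonde N (\row_j (s j)%:R)).
  rewrite det_Vandermonde; apply/prodf_neq0 => i _; apply/prodf_neq0 => j lt_ij.
  rewrite !mxE subr_eq0 eqr_nat; apply: contraTneq lt_ij => /val_inj /s_inj ->.
  by rewrite ltnn.
by apply/matrixP => i j; rewrite !mxE.
Qed.

Lemma exists_nonroot_gt {R : numDomainType} (Q : {poly R}) (c : R) :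
  Q != 0 -> exists2 t, c < t & ~~ root Q t.
Proof.
move=> Q_neq0; pose ts := [seq c + i.+1%:R | i <- iota 0 (size Q)].
have /allPn[_ /mapP[i _ ->] nonroot] : ~~ all (root Q) ts.
  apply: contraTN (leqnn (size Q)) => all_root; rewrite -ltnNge.
  rewrite -[X in (X < _)%N](size_iota 0) -(size_map (fun i => c + i.+1%:R)).
  apply: max_poly_roots Q_neq0 all_root _.
  by rewrite map_inj_uniq ?iota_uniq // => i j /addrI /eqP; rewrite eqr_nat => /eqP [].
by exists (c + i.+1%:R); rewrite // ltrDl ltr0Sn.
Qed.

Section FullSparkTopology.
Context {R : realFieldType} {N M : nat}.

Lemma continuous_det_colsub (s : 'I_N -> 'I_M) :
  continuous (fun F : 'M[R]_(N, M) => \det (colsub s F)).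
Proof.
have -> : (fun F : 'M[R]_(N, M) => \det (colsub s F)) =
    (fun F => \sum_(p : 'S_N) ((-1) ^+ p * \prod_i F i (s (p i)))).
  apply: funext => F; apply: eq_bigr => p _.
  by congr (_ * _); apply: eq_bigr => i _; rewrite mxE.
apply: continuous_big; first exact: add_continuous.
move=> p _ F; apply: (@continuousM _ _ (fun=> (-1) ^+ p)).
  exact: cst_continuous.
apply: (@continuous_big _ _ _ _ _ (@mul_continuous R)) => // i _.
exact: coord_continuous.
Qed.

Lemma open_full_spark : open (@full_spark R N M).
Proof.
pose minors (F : 'M[R]_(N, M)) :=
  \prod_(s : {ffun 'I_N -> 'I_M} | injectiveb s) \det (colsub s F).
have -> : @full_spark R N M = minors @^-1` [set r | r != 0].
  apply/seteqP; split=> F /= => [sparkF|/prodf_neq0 //].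
  by apply/prodf_neq0 => s; exact: sparkF.
apply: open_comp; last exact: open_neq.
move=> F _; apply: (@continuous_big _ _ _ _ _ (@mul_continuous R)) => // s _.
exact: continuous_det_colsub.
Qed.

Lemma dense_full_spark : dense (@full_spark R N M).
Proof.
move=> O [F0 OF0] oO; have /nbhs_ballP[e e_gt0 F0e_O] : nbhs F0 O.
  exact: open_nbhs_nbhs.
pose V := Vandermonde N (\row_(j < M) j%:R : 'rV[R]_M).
have [Q Q_neq0 nonroot_spark] := full_spark_perturb F0 _ (full_spark_Vandermonde R N M).
have [t Ve_lt_t Qt] := @exists_nonroot_gt _ Q (`|V| / e) Q_neq0.
have t_gt0 : 0 < t by apply: le_lt_trans Ve_lt_t; rewrite divr_ge0 // ltW.
exists (F0 + t^-1 *: V); split; last by apply: nonroot_spark; rewrite ?gt_eqF.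
apply: F0e_O; rewrite -ball_normE /ball_ /= opprD addrA subrr add0r normrN normrZ.
by rewrite gtr0_norm ?invr_gt0 // mulrC ltr_pdivrMr // mulrC -ltr_pdivrMr.
Qed.

End FullSparkTopology.

Lemma normr_eq_cases {R : realDomainType} {a b : R} : `|a| = `|b| -> a = b \/ a = - b.
Proof.
move=> ab; have /eqP : a ^+ 2 = b ^+ 2.
  by rewrite -(real_normK (num_real a)) -(real_normK (num_real b)) ab.
by rewrite eqf_sqr => /orP[/eqP|/eqP]; [left|right].
Qed.

Section Retrievable.
Context {R : realType} {N M : nat}.
Implicit Types (F : 'M[R]_(N, M)) (x y : 'rV[R]_N).

Definition off_partition_normals F := [set x : 'rV[R]_N | forall S : {set 'I_M},
  partition_normal F S != 0 -> (x *m (partition_normal F S)^T) 0 0 != 0].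

Lemma open_dense_off_partition_normals F :
  open (off_partition_normals F) /\ dense (off_partition_normals F).
Proof.
have nonorth S := open_dense_nonorthogonal (partition_normal F S).
by apply: open_dense_bigcap => S; case: (nonorth S).
Qed.

Lemma off_partition_normals_retrievable F : (N < M)%N -> full_spark F ->
  off_partition_normals F `<=` phase_retrievable_set F.
Proof.
move=> ltNM sparkF x x_off y same_abs.
have [N0|N_gt0] := posnP N.
  by left; apply/rowP => i; exfalso; have := ltn_ord i; lia.
have freeF : row_free F by rewrite /row_free full_spark_rank // ltnW.
pose S : {set 'I_M} := [set k | (y *m F) 0 k == (x *m F) 0 k]%SET.
have opp_notin_S k : k \notin S -> (y *m F) 0 k = - (x *m F) 0 k.
  by rewrite /S inE => /eqP neq_yx; case: (normr_eq_cases (same_abs k)) => // /neq_yx.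
have [/cards0_eq S0|S_gt0] := posnP #|S|.
  right; apply: (row_free_inj freeF); apply/rowP => k; rewrite /= mulNmx [RHS]mxE.
  by apply: opp_notin_S; rewrite S0 inE.
have [/cards0_eq SC0|SC_gt0] := posnP #|~: S|.
  left; apply: (row_free_inj freeF); apply/rowP => k /=.
  have : k \notin ~: S by rewrite SC0 inE.
  by rewrite inE negbK /S inE => /eqP.
have z_neq0 : partition_normal F S != 0 by exact: partition_normal_neq0.
have : (x + x) *m (partition_normal F S)^T = 0.
  apply: (partition_normal_sign_flip _ _ _ y) => k; last by rewrite inE => /opp_notin_S.
  by rewrite /S inE => /eqP.
rewrite mulmxDl => /(congr1 (fun A : 'M[R]_1 => A 0 0)) /eqP.
rewrite [X in X == _]mxE [X in _ == X]mxE -mulr2n mulrn_eq0 /=.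
by rewrite (negbTE (x_off S z_neq0)).
Qed.

End Retrievable.

Theorem theorem2p9 (R : realType) (N M : nat) (hMN : (N < M)%N) :
  exists G : set 'M[R]_(N, M),
    [/\ G `<=` @frames R N M, open G, dense G &
      forall F : 'M[R]_(N, M), G F ->
        exists U : set 'rV[R]_N,
          [/\ open U, dense U & U `<=` phase_retrievable_set F]].
Proof.
exists full_spark; split.
- by move=> F sparkF; exact: full_spark_rank (ltnW hMN) _ sparkF.
- exact: open_full_spark.
- exact: dense_full_spark.
move=> F sparkF; exists (off_partition_normals F).
have [open_off dense_off] := open_dense_off_partition_normals F.
by split=> //; exact: off_partition_normals_retrievable.
Qed.
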